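(* Let $(x_t)_{t=1}^T$ be a sequence with $x_t>0$ for all $t$. Then for any $\alpha\in[0,1]$, $$\sum_{t=1}^T\frac{x_t^{1-\alpha}}{\sqrt{1+\sum_{s=1}^t x_s^{1-2\alpha}}}\le\mathcal{O}\Big(\sqrt{\Big(\sum_{t=1}^Tx_t\Big)\log\Big(1+\sum_{t=1}^Tx_t^{1-2\alpha}\Big)}\Big).$$
   Context: $\mathcal{O}(\cdot)$ hides an absolute constant (independent of $T$, $\alpha$ and the sequence). *)

From Stdlib Require Import Reals.
Open Scope R_scope.

Fixpoint sum1 (f : nat -> R) (n : nat) : R :=
  match n with
  | O => 0
  | S m => sum1 f m + f (S m)
  end.

(* With a_t = x_t^(1-2α) and S_t = a_1 + ... + a_t, each summand factors as
   sqrt(x_t) * sqrt(a_t / (1 + S_t)), so Cauchy-Schwarz bounds the sum by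
   sqrt(Σ x_t) * sqrt(Σ a_t / (1 + S_t)).  The second sum telescopes against
   the logarithm, since a_t / (1 + S_t) = 1 - (1 + S_(t-1)) / (1 + S_t)
   <= ln (1 + S_t) - ln (1 + S_(t-1)).  This gives the bound with constant 1. *)

From Stdlib Require Import Reals Lra Lia.
Open Scope R_scope.

Lemma ln_le_sub_1 y : 0 < y -> ln y <= y - 1.
Proof.
  intros Hy.
  pose proof (exp_ineq1_le (ln y)) as Hexp.
  rewrite exp_ln in Hexp; lra.
Qed.

Lemma one_sub_div_le_ln_sub b c : 0 < b -> 0 < c -> 1 - b / c <= ln c - ln b.
Proof.
  intros Hb Hc.
  assert (Hbc : 0 < b / c) by (apply Rdiv_lt_0_compat; assumption).
  assert (Hln : ln (b / c) = ln b - ln c).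
  { unfold Rdiv. rewrite ln_mult, ln_Rinv by auto with real. ring. }
  pose proof (ln_le_sub_1 _ Hbc). lra.
Qed.

Lemma sum1_ext f g n :
  (forall t, (1 <= t <= n)%nat -> f t = g t) -> sum1 f n = sum1 g n.
Proof.
  induction n as [|n IH]; intros Hfg; cbn [sum1]; [reflexivity|].
  rewrite IH by (intros; apply Hfg; lia).
  rewrite Hfg by lia. reflexivity.
Qed.

Lemma sum1_nonneg f n :
  (forall t, (1 <= t <= n)%nat -> 0 <= f t) -> 0 <= sum1 f n.
Proof.
  induction n as [|n IH]; intros Hf; cbn [sum1]; [lra|].
  assert (0 <= sum1 f n) by (apply IH; intros; apply Hf; lia).
  assert (0 <= f (S n)) by (apply Hf; lia).
  lra.
Qed.

Lemma sum1_mul_le_sqrt p q n :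
  sum1 (fun t => p t * q t) n <=
  sqrt (sum1 (fun t => p t ^ 2) n) * sqrt (sum1 (fun t => q t ^ 2) n).
Proof.
  induction n as [|n IH]; cbn [sum1]; [rewrite sqrt_0; lra|].
  set (U := sum1 (fun t => p t ^ 2) n) in *.
  set (V := sum1 (fun t => q t ^ 2) n) in *.
  assert (HU : 0 <= U) by (apply sum1_nonneg; intros; apply pow2_ge_0).
  assert (HV : 0 <= V) by (apply sum1_nonneg; intros; apply pow2_ge_0).
  pose proof (sqrt_cauchy (sqrt U) (p (S n)) (sqrt V) (q (S n))) as Hcs.
  rewrite !Rsqr_sqrt, <- !Rsqr_pow2 in * by assumption.
  lra.
Qed.

Lemma sum1_div_one_add_le_ln a n :
  (forall t, (1 <= t <= n)%nat -> 0 <= a t) ->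
  sum1 (fun t => a t / (1 + sum1 a t)) n <= ln (1 + sum1 a n).
Proof.
  induction n as [|n IH]; intros Ha; cbn [sum1].
  - rewrite Rplus_0_r, ln_1. lra.
  - assert (HS : 0 <= sum1 a n) by (apply sum1_nonneg; intros; apply Ha; lia).
    assert (Han : 0 <= a (S n)) by (apply Ha; lia).
    assert (Hstep : a (S n) / (1 + (sum1 a n + a (S n)))
                    = 1 - (1 + sum1 a n) / (1 + (sum1 a n + a (S n))))
      by (field; lra).
    pose proof (one_sub_div_le_ln_sub (1 + sum1 a n) (1 + (sum1 a n + a (S n))))
      as Hln.
    assert (sum1 (fun t => a t / (1 + sum1 a t)) n <= ln (1 + sum1 a n))
      by (apply IH; intros; apply Ha; lia).
    lra.
Qed.

Lemma sum1_sqrt_mul_le x a n :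
  (forall t, (1 <= t <= n)%nat -> 0 <= x t /\ 0 <= a t) ->
  sum1 (fun t => sqrt (x t) * sqrt (a t / (1 + sum1 a t))) n
  <= sqrt (sum1 x n * ln (1 + sum1 a n)).
Proof.
  intros Hxa.
  assert (Hsq_x : sum1 (fun t => sqrt (x t) ^ 2) n = sum1 x n).
  { apply sum1_ext; intros t Ht. apply pow2_sqrt, Hxa, Ht. }
  assert (Hsq_a : sum1 (fun t => sqrt (a t / (1 + sum1 a t)) ^ 2) n
                  = sum1 (fun t => a t / (1 + sum1 a t)) n).
  { apply sum1_ext; intros t Ht. apply pow2_sqrt.
    assert (0 <= sum1 a t) by (apply sum1_nonneg; intros; apply Hxa; lia).
    apply Rmult_le_pos; [apply Hxa, Ht | apply Rlt_le, Rinv_0_lt_compat; lra]. }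
  eapply Rle_trans; [apply sum1_mul_le_sqrt|]; cbv beta.
  rewrite Hsq_x, Hsq_a, sqrt_mult_alt
    by (apply sum1_nonneg; intros; apply Hxa; assumption).
  apply Rmult_le_compat_l; [apply sqrt_pos|].
  apply sqrt_le_1_alt, sum1_div_one_add_le_ln.
  intros; apply Hxa; assumption.
Qed.

Lemma Rpower_mid_sqrt x b c :
  0 < x -> Rpower x ((b + c) / 2) = sqrt (Rpower x b) * sqrt (Rpower x c).
Proof.
  intros Hx.
  rewrite <- !Rpower_sqrt by apply exp_pos.
  rewrite !Rpower_mult, <- Rpower_plus.
  f_equal. field.
Qed.

Theorem lemma2 :
  exists C : R, 0 < C /\
  forall (T : nat) (x : nat -> R) (alpha : R),
    (forall t, (1 <= t <= T)%nat -> 0 < x t) ->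
    0 <= alpha <= 1 ->
    sum1 (fun t => Rpower (x t) (1 - alpha) /
                   sqrt (1 + sum1 (fun s => Rpower (x s) (1 - 2 * alpha)) t)) T
    <= C * sqrt (sum1 x T * ln (1 + sum1 (fun t => Rpower (x t) (1 - 2 * alpha)) T)).
Proof.
  exists 1. split; [lra|].
  intros T x alpha Hx _.
  set (a := fun s => Rpower (x s) (1 - 2 * alpha)).
  assert (Ha : forall t, 0 <= a t) by (intros; apply Rlt_le, exp_pos).
  rewrite Rmult_1_l.
  erewrite sum1_ext; [apply sum1_sqrt_mul_le|].
  - intros t Ht. split; [apply Rlt_le, Hx, Ht | apply Ha].
  - intros t Ht.
    assert (0 <= sum1 a t) by (apply sum1_nonneg; intros; apply Ha).
    cbv beta. rewrite sqrt_div_alt by lra.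
    replace (1 - alpha) with ((1 + (1 - 2 * alpha)) / 2) by field.
    rewrite Rpower_mid_sqrt, Rpower_1 by apply Hx, Ht.
    unfold a, Rdiv. ring.
Qed.
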